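(* Let $\mathcal H$ be a complex Hilbert space and $T\in\mathcal B(\mathcal H)$ left-invertible with $0\in\sigma(T)$, and let $T'=T(T^*T)^{-1}$. Then: (i) if $\sigma_r(T')\subseteq\overline{\mathbb D}$, then $\mathbb D\subseteq\sigma_r(T)\setminus\sigma_l(T)$; (ii) if $\|T\|\le1$ and $\sigma_r(T')\subseteq\overline{\mathbb D}$, then $\sigma_r(T)=\sigma(T)=\overline{\mathbb D}$.
   Context: $\mathbb D$ is the open unit disc; $\sigma_l$, $\sigma_r$ denote the left and right spectrum (set of $\lambda$ with $A-\lambda I$ not left-, resp. not right-, invertible). *)

From HB Require Import structures.
From mathcomp Require Import all_boot all_order all_algebra.
From mathcomp Require Import all_classical all_reals all_analysis.
From mathcomp Require Import complex.
Set Implicit Arguments. Unset Strict Implicit. Unset Printing Implicit Defensive.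
Import Order.TTheory GRing.Theory Num.Theory.
Local Open Scope ring_scope.

Definition is_inner (R : realType) (V : normedModType R[i]) (ip : V -> V -> R[i]) : Prop :=
  (forall (a : R[i]) (x y z : V), ip (a *: x + y) z = a * ip x z + ip y z) /\
  (forall x y : V, ip y x = (ip x y)^*) /\
  (forall x : V, ip x x = `|x| ^+ 2).

Definition bounded_op (R : realType) (V : normedModType R[i]) (A : V -> V) : Prop :=
  (forall (a : R[i]) (x y : V), A (a *: x + y) = a *: A x + A y) /\
  exists M : R[i], forall x : V, `|A x| <= M * `|x|.

Definition is_adjoint (R : realType) (V : normedModType R[i]) (ip : V -> V -> R[i])
  (A B : V -> V) : Prop := forall x y : V, ip (A x) y = ip x (B y).

Definition left_invertible (R : realType) (V : normedModType R[i]) (A : V -> V) : Prop :=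
  exists S : V -> V, bounded_op S /\ forall x, S (A x) = x.
Definition right_invertible (R : realType) (V : normedModType R[i]) (A : V -> V) : Prop :=
  exists S : V -> V, bounded_op S /\ forall x, A (S x) = x.
Definition invertible (R : realType) (V : normedModType R[i]) (A : V -> V) : Prop :=
  exists S : V -> V, bounded_op S /\ (forall x, S (A x) = x) /\ (forall x, A (S x) = x).

Definition shift_op (R : realType) (V : normedModType R[i]) (A : V -> V) (l : R[i]) : V -> V :=
  fun x => A x - l *: x.

Definition spec (R : realType) (V : normedModType R[i]) (A : V -> V) : set R[i] :=
  [set l | ~ invertible (shift_op A l)].
Definition lspec (R : realType) (V : normedModType R[i]) (A : V -> V) : set R[i] :=
  [set l | ~ left_invertible (shift_op A l)].
Definition rspec (R : realType) (V : normedModType R[i]) (A : V -> V) : set R[i] :=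
  [set l | ~ right_invertible (shift_op A l)].

Definition open_disc (R : realType) : set R[i] := [set l | `|l| < 1].
Definition closed_disc (R : realType) : set R[i] := [set l | `|l| <= 1].

From HB Require Import structures.
From mathcomp Require Import all_boot all_order all_algebra.
From mathcomp Require Import all_classical all_reals all_analysis.
From mathcomp Require Import complex ring lra.
Import Order.TTheory GRing.Theory Num.Theory Normc.
Local Open Scope classical_set_scope.
Local Open Scope complex_scope.
Local Open Scope ring_scope.
Set Implicit Arguments. Unset Strict Implicit. Unset Printing Implicit Defensive.

(* For |l| < 1 put mu = 1 / conj l. Since |mu| > 1, T' - mu is right invertible,
   and T' - mu is the adjoint of B T^* - 1/l = -(1/l) B T^* (T - l); this bounds
   T - l from below, so T - l is left invertible (a bounded-below operator with an
   adjoint is left invertible in a Hilbert space). Invertibility of T - s l is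
   locally constant in s in [0, 1], because a small perturbation of a
   bounded-below operator is invertible iff the operator is; it fails at s = 0, so
   T - l is not invertible, hence not right invertible. Right invertibility is an
   open condition, which extends this to |l| <= 1, and when ||T|| <= 1 a Neumann
   series inverts T - l for |l| > 1. *)

Section ComplexModulus.
Variable R : rcfType.
Implicit Types (a : R[i]) (r : R).

Lemma normr_normc a : `|a| = (normc a)%:C.
Proof. by case: a. Qed.

Lemma normc_ge0 a : 0 <= normc a.
Proof. by case: a => * /=; apply: sqrtr_ge0. Qed.

Lemma normc_eq0 a : (normc a == 0) = (a == 0).
Proof. by apply/eqP/eqP => [/eq0_normc|->]; last exact: normc0. Qed.

Lemma normc_gt0 a : (0 < normc a) = (a != 0).
Proof. by rewrite lt_neqAle normc_ge0 andbT eq_sym normc_eq0. Qed.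

Lemma normc_real r : normc r%:C = `|r|.
Proof. by rewrite /normc /= expr0n /= addr0 sqrtr_sqr. Qed.

Lemma normc_conj a : normc a^*%C = normc a.
Proof. by case: a => x y; rewrite /normc /= sqrrN. Qed.

Lemma normc_lt1 a : (`|a| < 1) = (normc a < 1).
Proof. by rewrite normr_normc -[1 in LHS]/(1%:C) ltcR. Qed.

Lemma normc_le1 a : (`|a| <= 1) = (normc a <= 1).
Proof. by rewrite normr_normc -[1 in LHS]/(1%:C) lecR. Qed.

End ComplexModulus.

Section VectorNorm.
Variables (R : realType) (V : normedModType R[i]).
Implicit Types (u v : V) (a : R[i]).

(* The norm of a normed R[i]-module takes values in R[i] (with zero imaginary
   part); [vnorm] is its real part, so that estimates live in the ordered field R. *)
Definition vnorm v : R := complex.Re `|v|.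

Lemma normr_vnorm v : `|v| = (vnorm v)%:C.
Proof. by rewrite /vnorm RRe_real // ger0_real. Qed.

Lemma vnorm_ge0 v : 0 <= vnorm v.
Proof. by have := normr_ge0 v; rewrite normr_vnorm lecR. Qed.

Lemma vnorm0 : vnorm 0 = 0.
Proof. by rewrite /vnorm normr0. Qed.

Lemma vnorm_eq0 v : (vnorm v == 0) = (v == 0).
Proof. by rewrite -[v == 0]normr_eq0 normr_vnorm (inj_eq (@complexI R)). Qed.

Lemma ler_vnormD u v : vnorm (u + v) <= vnorm u + vnorm v.
Proof. by have := ler_normD u v; rewrite !normr_vnorm -rmorphD lecR. Qed.

Lemma vnormN v : vnorm (- v) = vnorm v.
Proof. by rewrite /vnorm normrN. Qed.

Lemma vnormZ a v : vnorm (a *: v) = normc a * vnorm v.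
Proof. by apply/complexI; rewrite -normr_vnorm normrZ normr_vnorm normr_normc -rmorphM. Qed.

Lemma vdistC u v : vnorm (u - v) = vnorm (v - u).
Proof. by rewrite -vnormN opprB. Qed.

Lemma lerB_vnormD u v : vnorm u - vnorm v <= vnorm (u + v).
Proof. by have := ler_vnormD (u + v) (- v); rewrite addrK vnormN lerBlDr. Qed.

End VectorNorm.

Section Operators.
Variables (R : realType) (V : completeNormedModType R[i]).
Implicit Types (A E Q : V -> V) (a l : R[i]) (x y : V).

Definition bounded_by A (M : R) := forall x, vnorm (A x) <= M * vnorm x.
Definition bounded_below A (c : R) := forall x, c * vnorm x <= vnorm (A x).

Section LinearOp.
Variables (A : V -> V) (hA : linear A).

Lemma linB x y : A (x - y) = A x - A y. Proof. exact: (zmod_morphism_linear hA x y). Qed.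
Lemma linZ a x : A (a *: x) = a *: A x. Proof. exact: (scalable_linear hA a x). Qed.
Lemma lin0 : A 0 = 0. Proof. by have := linB 0 0; rewrite !subrr. Qed.

End LinearOp.

Lemma bounded_opP A : bounded_op A -> linear A /\ exists2 M, 0 < M & bounded_by A M.
Proof.
case=> hA [[a b] hM]; split => //; exists (`|a| + 1); first by rewrite ltr_pwDr.
move=> x; have := hM x; rewrite !normr_vnorm lecE /= !mulr0 !subr0 => /andP[_].
by move/le_trans; apply; rewrite ler_wpM2r ?vnorm_ge0 // (le_trans (ler_norm a)) ?lerDl.
Qed.

Lemma bounded_opI A M : linear A -> bounded_by A M -> bounded_op A.
Proof.
by move=> hA hM; split => //; exists M%:C => x; rewrite !normr_vnorm -rmorphM lecR.
Qed.

Lemma bounded_op_comp A E : bounded_op A -> bounded_op E -> bounded_op (fun x => A (E x)).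
Proof.
move=> /bounded_opP[hA [M M0 hM]] /bounded_opP[hE [N N0 hN]].
apply: (@bounded_opI _ (M * N)) => [a x y|x]; first by rewrite hE hA.
by apply: le_trans (hM _) _; rewrite -mulrA ler_wpM2l ?(ltW M0).
Qed.

Lemma scale_linear a : linear (fun x : V => a *: x).
Proof. by move=> b x y; rewrite scalerDr !scalerA mulrC. Qed.

Lemma shift_op_linear A l : linear A -> linear (shift_op A l).
Proof.
move=> hA a x y; rewrite /shift_op hA scalerDr scalerBr !scalerA mulrC.
by rewrite opprD addrACA.
Qed.

Lemma shift_op_bounded A l : bounded_op A -> bounded_op (shift_op A l).
Proof.
move=> /bounded_opP[hA [M _ hM]]; apply: (@bounded_opI _ (M + normc l)).
  exact: shift_op_linear.
move=> x; apply: le_trans (ler_vnormD _ _) _.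
by rewrite vnormN vnormZ mulrDl lerD.
Qed.

Lemma shift_opD A l l' x : shift_op A l' x = shift_op A l x + (l - l') *: x.
Proof. by rewrite /shift_op scalerBl addrA subrK. Qed.

Lemma geometric_telescope (u : nat -> V) (q K : R) : 0 <= q -> q <= 1 ->
  (forall n, vnorm (u n.+1 - u n) <= q ^+ n * K) ->
  forall n d, (1 - q) * vnorm (u (n + d)%N - u n) <= (q ^+ n - q ^+ (n + d)) * K.
Proof.
move=> q0 q1 du n; elim=> [|d IH]; first by rewrite addn0 subrr vnorm0 mulr0 subrr mul0r.
have q'0 : 0 <= 1 - q by rewrite subr_ge0.
have -> : u (n + d.+1)%N - u n = (u (n + d).+1 - u (n + d)%N) + (u (n + d)%N - u n).
  by rewrite addnS addrA subrK.
have := ler_wpM2l q'0 (ler_vnormD (u (n + d).+1 - u (n + d)%N) (u (n + d)%N - u n)).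
have := ler_wpM2l q'0 (du (n + d)%N).
rewrite addnS exprS => h1 h2; have := exprn_ge0 (n + d) q0; nra.
Qed.

Lemma geometric_cauchy_cvg (u : nat -> V) (q K : R) : 0 <= q < 1 ->
  (forall n, vnorm (u n.+1 - u n) <= q ^+ n * K) -> cvgn u.
Proof.
move=> /andP[q0 q1] du.
have K0 : 0 <= K by have := le_trans (vnorm_ge0 _) (du 0%N); rewrite expr0 mul1r.
have q'0 : 0 < 1 - q by rewrite subr_gt0.
have telescope := geometric_telescope q0 (ltW q1) du.
apply/cauchy_cvgP/cauchy_ballP => e e0.
have e0' : 0 < complex.Re e by move: e0; rewrite ltcE /= => /andP[].
have [N hN] : exists N, q ^+ N * K < complex.Re e * (1 - q).
  have [<-|K0'] := eqVneq 0 K; first by exists 0%N; rewrite mulr0 mulr_gt0.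
  have := @cvg_expr R q; rewrite ger0_norm // => /(_ q1) /cvgrPdist_lt.
  have Kpos : 0 < K by rewrite lt_neqAle K0' K0.
  case/(_ (complex.Re e * (1 - q) / K)) => [|N _ hN]; first by rewrite !mulr_gt0 ?invr_gt0.
  exists N; rewrite -ltr_pdivlMr //.
  by have := hN N (leqnn N); rewrite /= sub0r normrN ger0_norm ?exprn_ge0.
have close n m : (N <= n <= m)%N -> vnorm (u m - u n) < complex.Re e.
  case/andP=> Nn nm; have := telescope n (m - n)%N; rewrite subnKC //.
  have : q ^+ n * K <= q ^+ N * K by rewrite ler_wpM2r // ler_wiXn2l // ltW.
  have := mulr_ge0 (exprn_ge0 m q0) K0.
  move=> h1 h2 h3; rewrite -(ltr_pM2l q'0) mulrC; nra.
near_simpl; exists ([set n | N <= n], [set n | N <= n])%N; first by split; exists N.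
move=> [n m] [/= Nn Nm]; rewrite -ball_normE /= -(RRe_real (gtr0_real e0)).
rewrite normr_vnorm ltcR; case/orP: (leq_total n m) => nm.
  by rewrite vdistC; apply: close; rewrite Nn.
by apply: close; rewrite Nm.
Qed.

Lemma neumann_surjective Q q : linear Q -> 0 <= q < 1 -> bounded_by Q q ->
  forall y, exists x, x - Q x = y.
Proof.
move=> hQ q01 hb y; have /andP[q0 q1] := q01.
pose u n := iter n (fun x => y + Q x) 0.
have uS n : u n.+1 = y + Q (u n) by [].
have du n : vnorm (u n.+1 - u n) <= q ^+ n * vnorm y.
  elim: n => [|n IH]; first by rewrite uS /u /= lin0 // !addr0 subr0 expr0 mul1r.
  have -> : u n.+2 - u n.+1 = Q (u n.+1 - u n).
    by rewrite linB // (uS n.+1) (uS n) opprD addrACA subrr add0r.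
  by apply: le_trans (hb _) _; rewrite exprS -mulrA ler_wpM2l.
have ul : u @ \oo --> limn u := geometric_cauchy_cvg q01 du.
exists (limn u); set l := limn u in ul *.
apply/eqP; rewrite -subr_eq0 -vnorm_eq0 eq_le vnorm_ge0 andbT.
apply/negP => /negP; rewrite -ltNge; set d := vnorm _ => d0.
move/cvgrPdist_lt: ul => /(_ (d / 2)%:C) [|N _ HN]; first by rewrite ltcR divr_gt0.
have := HN N (leqnn N); have := HN N.+1 (leqnSn N); rewrite /= !normr_vnorm !ltcR.
have := ler_vnormD (l - u N.+1) (Q (u N - l)).
have -> : l - u N.+1 + Q (u N - l) = l - Q l - y.
  by rewrite linB // uS opprD !addrA subrK addrAC.
have := hb (u N - l); rewrite vdistC.
have := vnorm_ge0 (l - u N); rewrite -/d; nra.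
Qed.

End Operators.

Section Invertibility.
Variables (R : realType) (V : completeNormedModType R[i]).
Implicit Types (A E : V -> V) (a l : R[i]).

Lemma scale_bounded a : bounded_by (fun x : V => a *: x) (normc a).
Proof. by move=> x; rewrite vnormZ. Qed.

Lemma add_linear A E : linear A -> linear E -> linear (fun x => A x + E x).
Proof. by move=> hA hE a x y; rewrite hA hE scalerDr addrACA. Qed.

Lemma bounded_below_add A E c e : bounded_below A c -> bounded_by E e ->
  bounded_below (fun x => A x + E x) (c - e).
Proof.
move=> hA hE x; have := lerB_vnormD (A x) (E x).
by have := hA x; have := hE x; rewrite mulrBl; lra.
Qed.

Lemma bounded_below_surj_invertible A c : linear A -> 0 < c -> bounded_below A c ->
  (forall y, exists x, A x = y) -> invertible A.
Proof.
move=> hA c0 hc surjA.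
have injA x x' : A x = A x' -> x = x'.
  move=> e; apply/eqP; rewrite -subr_eq0 -vnorm_eq0 eq_le vnorm_ge0 andbT.
  by have := hc (x - x'); rewrite linB // e subrr vnorm0 pmulr_rle0.
pose S y := projT1 (cid (surjA y)).
have AS y : A (S y) = y by rewrite /S; case: cid.
exists S; split; last by split => // x; apply: injA; rewrite AS.
apply: (bounded_opI (M := c^-1)) => [a x y|y]; first by apply: injA; rewrite hA !AS.
by rewrite ler_pdivlMl // -{2}(AS y).
Qed.

Lemma left_invertible_bounded_below A : left_invertible A ->
  exists2 c, 0 < c & bounded_below A c.
Proof.
case=> S [/bounded_opP[_ [M M0 hM]] SA]; exists M^-1; rewrite ?invr_gt0 // => x.
by rewrite mulrC ler_pdivrMr // mulrC; have := hM (A x); rewrite SA.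
Qed.

Lemma left_right_invertible A : left_invertible A -> right_invertible A -> invertible A.
Proof.
move=> [S [_ SA]] [T [bT AT]]; exists T; do 2!split => //.
by move=> x; rewrite -[LHS]SA AT SA.
Qed.

Lemma invertible_right_invertible A : invertible A -> right_invertible A.
Proof. by case=> S [bS [_ AS]]; exists S. Qed.

Lemma scale_invertible a : a != 0 -> invertible (fun x : V => a *: x).
Proof.
move=> a0; exists (fun x => a^-1 *: x); split.
  exact: bounded_opI (scale_linear _) (scale_bounded _).
by split => x; rewrite scalerA ?mulVf ?mulfV // scale1r.
Qed.

Lemma invertible_add A E c e : linear A -> linear E -> invertible A -> 0 < c ->
  bounded_below A c -> bounded_by E e -> 0 <= e -> e < c ->
  invertible (fun x => A x + E x).
Proof.
move=> hA hE [S [bS [SA AS]]] c0 hc hEe e0 ec.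
have [hS _] := bounded_opP bS.
apply: (bounded_below_surj_invertible (c := c - e)).
- exact: add_linear.
- by rewrite subr_gt0.
- exact: bounded_below_add.
move=> y; pose Q z := - E (S z).
have hQ : linear Q by move=> a x z; rewrite /Q hS hE opprD scalerN.
have hSc z : vnorm (S z) <= c^-1 * vnorm z by rewrite ler_pdivlMl // -{2}(AS z).
have q01 : 0 <= e / c < 1.
  by rewrite divr_ge0 ?(ltW c0) //= ltr_pdivrMr ?mul1r.
have Qq : bounded_by Q (e / c).
  move=> z; rewrite /Q vnormN; apply: le_trans (hEe _) _.
  by rewrite -mulrA ler_wpM2l.
have [z <-] := neumann_surjective hQ q01 Qq y.
by exists (S z); rewrite AS /Q opprK.
Qed.

Lemma invertible_addE A E c e : linear A -> linear E -> 0 < c -> bounded_below A c ->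
  bounded_by E e -> 0 <= e -> e * 2 < c ->
  invertible (fun x => A x + E x) <-> invertible A.
Proof.
move=> hA hE c0 hc hEe e0 ec; split => invA; last first.
  by apply: (invertible_add (c := c) (e := e)) => //; lra.
have -> : A = fun x => (A x + E x) + - E x by apply/funext => x; rewrite addrK.
apply: (invertible_add (c := c - e) (e := e)) => //.
- exact: add_linear.
- by move=> a x y; rewrite hE opprD scalerN.
- by lra.
- exact: bounded_below_add.
- by move=> x; rewrite vnormN.
- by lra.
Qed.

Lemma right_invertible_add A : linear A -> right_invertible A ->
  exists2 d, 0 < d & forall E e, linear E -> bounded_by E e -> 0 <= e -> e < d ->
    right_invertible (fun x => A x + E x).
Proof.
move=> hA [S [bS AS]]; have [hS [M M0 hM]] := bounded_opP bS.
exists M^-1; rewrite ?invr_gt0 // => E e hE hEe e0 eM.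
have [W [bW [_ IW]]] : invertible (fun y => 1 *: y + E (S y)).
  apply: (invertible_add (c := 1) (e := e * M)) => //.
  - exact: scale_linear.
  - by move=> a x y; rewrite hS hE.
  - exact: scale_invertible (oner_neq0 _).
  - by move=> x; rewrite vnormZ normc1.
  - by move=> x; apply: le_trans (hEe _) _; rewrite -mulrA ler_wpM2l.
  - exact: mulr_ge0 (ltW M0).
  - by rewrite -ltr_pdivlMr // div1r.
exists (fun y => S (W y)); split; first exact: bounded_op_comp.
by move=> y /=; rewrite AS -[RHS]IW scale1r.
Qed.

Lemma shift_op_invertible A M l : linear A -> bounded_by A M -> 0 <= M -> M < normc l ->
  invertible (shift_op A l).
Proof.
move=> hA hM M0 Ml; have l0 : l != 0 by rewrite -normc_gt0 (le_lt_trans M0).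
have -> : shift_op A l = fun x => (- l) *: x + A x.
  by apply/funext => x; rewrite /shift_op addrC scaleNr.
apply: (invertible_add (c := normc l) (e := M)) => //.
- exact: scale_linear.
- by apply: scale_invertible; rewrite oppr_eq0.
- exact: le_lt_trans Ml.
- by move=> x; rewrite vnormZ normcN.
Qed.

End Invertibility.

Lemma locally_constant_unit_interval (R : realType) (P : R -> Prop) :
  (forall s, 0 <= s <= 1 -> exists2 d, 0 < d &
     forall t, 0 <= t <= 1 -> `|s - t| < d -> P s <-> P t) ->
  P 0 -> P 1.
Proof.
move=> loc P0; pose N := [set s | 0 <= s <= 1 /\ P s].
have N0 : N 0 by rewrite /N /= lexx ler01.
have supN : has_sup N by split; [exists 0 | exists 1 => s [/andP[]]].
set s0 := sup N.
have s01 : 0 <= s0 <= 1.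
  by rewrite sup_upper_bound //=; apply: ge_sup => [|s [/andP[]]]; first by exists 0.
have [d d0 near_s0] := loc s0 s01.
have Ps0 : P s0.
  have [s1 [s1I Ps1]] := sup_adherent d0 supN; rewrite -/s0 => s1d.
  have s1s0 : s1 <= s0 := sup_upper_bound supN (conj s1I Ps1).
  by apply/(near_s0 s1 s1I) => //; rewrite ger0_norm ?subr_ge0 //; lra.
have [s0_lt1|] := ltP s0 1; last by move=> s0_ge1; rewrite (_ : 1 = s0) //; lra.
pose s2 := Num.min (s0 + d / 2) 1.
have s2I : 0 <= s2 <= 1 by rewrite ge_min lexx orbT le_min ler01 andbT; lra.
have s0s2 : s0 < s2 by rewrite lt_min s0_lt1 andbT; lra.
have : N s2.
  split => //; apply/(near_s0 s2 s2I) => //.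
  rewrite ltr0_norm ?subr_lt0 // opprB ltrBlDl gt_min; apply/orP; left; lra.
by move/(sup_upper_bound supN); rewrite leNgt s0s2.
Qed.

Section InnerProduct.
Variables (R : realType) (V : completeNormedModType R[i]) (ip : V -> V -> R[i]).
Hypothesis ip_inner : is_inner ip.
Implicit Types (A D P : V -> V) (x y z : V) (a : R[i]).

Lemma ip_scalar z : scalar (ip^~ z).
Proof. by case: ip_inner => h _ a x y; exact: h. Qed.

Lemma ipC x y : ip y x = (ip x y)^*%C.
Proof. by case: ip_inner => _ []. Qed.

Lemma ipxx x : ip x x = (vnorm x ^+ 2)%:C.
Proof. by case: ip_inner => _ [_ ->]; rewrite normr_vnorm rmorphXn. Qed.

Lemma ipBl x y z : ip (x - y) z = ip x z - ip y z.
Proof. exact: (zmod_morphism_linear (ip_scalar z) x y). Qed.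

Lemma ipZl a x z : ip (a *: x) z = a * ip x z.
Proof. exact: (scalable_linear (ip_scalar z) a x). Qed.

Lemma ipBr x y z : ip z (x - y) = ip z x - ip z y.
Proof. by rewrite ![ip z _]ipC ipBl rmorphB. Qed.

Lemma ipZr a x z : ip z (a *: x) = a^*%C * ip z x.
Proof. by rewrite ![ip z _]ipC ipZl rmorphM. Qed.

Lemma cauchy_schwarz x y : normc (ip x y) <= vnorm x * vnorm y.
Proof.
have [->|y0] := eqVneq y 0.
  by have := ipBr 0 0 x; rewrite !subrr => ->; rewrite normc0 vnorm0 mulr0.
set a := ip x y; set n := vnorm y ^+ 2.
have n0 : 0 < n by rewrite exprn_gt0 // lt_neqAle eq_sym vnorm_eq0 y0 vnorm_ge0.
pose w := n%:C *: x - a *: y.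
have : ip w w = n%:C * (n%:C * (vnorm x ^+ 2)%:C - a * a^*%C).
  rewrite /w !ipBl !ipBr !ipZl !ipZr !ipxx -/n (ipC x y) -/a conjc_real.
  by ring.
rewrite -sqr_normc normr_normc -!rmorphXn -!rmorphM -rmorphB -rmorphM.
rewrite ipxx => /complexI ww.
have : 0 <= n * (n * vnorm x ^+ 2 - normc a ^+ 2) by rewrite -ww exprn_ge0 ?vnorm_ge0.
rewrite pmulr_rge0 // subr_ge0 /n -exprMn => le_a.
by rewrite -(ler_pXn2r (isT : (0 < 2)%N)) ?nnegrE ?mulr_ge0 ?vnorm_ge0 ?normc_ge0 // mulrC.
Qed.

Definition coercive P (c : R) :=
  forall x, exists2 r : R, ip (P x) x = r%:C & c * vnorm x ^+ 2 <= r.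

Lemma coercive_bounded_below P c : coercive P c -> bounded_below P c.
Proof.
move=> hP x; have [r e cr] := hP x.
have := cauchy_schwarz (P x) x; rewrite e normc_real => rPx.
have [->|x0] := eqVneq x 0; first by rewrite vnorm0 mulr0 vnorm_ge0.
have xpos : 0 < vnorm x by rewrite lt_neqAle eq_sym vnorm_eq0 x0 vnorm_ge0.
rewrite -(ler_pM2r xpos); have := ler_norm r; nra.
Qed.

Lemma coercive_contraction P c N t : coercive P c -> bounded_by P N -> 0 <= N ->
  0 < t -> t * N ^+ 2 <= c -> t * c <= 1 ->
  bounded_by (fun x => x - t%:C *: P x) (1 - t * c / 2).
Proof.
move=> hP hPN N0 t0 tN tc x; have [r e cr] := hP x.
have expand : vnorm (x - t%:C *: P x) ^+ 2
    = vnorm x ^+ 2 - 2 * t * r + t ^+ 2 * vnorm (P x) ^+ 2.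
  apply: complexI; rewrite -ipxx !ipBl !ipBr !ipZl !ipZr !ipxx.
  rewrite (ipC (P x) x) e !conjc_real.
  move: (vnorm x ^+ 2) (vnorm (P x) ^+ 2) => u v.
  by rewrite !rmorphD !rmorphN !rmorphM /= rmorph_nat; ring.
have Px2 : vnorm (P x) ^+ 2 <= N ^+ 2 * vnorm x ^+ 2.
  by rewrite -exprMn ler_pXn2r ?nnegrE ?mulr_ge0 ?vnorm_ge0.
have tPx : t ^+ 2 * vnorm (P x) ^+ 2 <= t * c * vnorm x ^+ 2.
  have := mulr_ge0 (ltW t0) (sqr_ge0 (vnorm x)); have := sqr_ge0 t; nra.
have tr : t * c * vnorm x ^+ 2 <= t * r by rewrite -mulrA ler_pM2l.
rewrite -(ler_pXn2r (isT : (0 < 2)%N)) ?nnegrE ?mulr_ge0 ?vnorm_ge0 //; last by lra.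
rewrite expand exprMn; have := sqr_ge0 (t * c); have := sqr_ge0 (vnorm x); nra.
Qed.

Lemma coercive_invertible P c : bounded_op P -> 0 < c -> coercive P c -> invertible P.
Proof.
move=> bP c0 hP; have [hPl [N N0 hN]] := bounded_opP bP.
pose t := c / (N ^+ 2 + c ^+ 2).
have D0 : 0 < N ^+ 2 + c ^+ 2 by rewrite ltr_pwDr ?exprn_gt0 ?sqr_ge0.
have t0 : 0 < t by rewrite divr_gt0.
have tN : t * N ^+ 2 <= c.
  by rewrite mulrAC ler_pdivrMr // ler_pM2l // lerDl sqr_ge0.
have tc : t * c <= 1 by rewrite mulrAC ler_pdivrMr // mul1r -expr2 lerDr sqr_ge0.
have hQ : linear (fun x => x - t%:C *: P x).
  by move=> a x y; rewrite hPl scalerDr scalerA mulrC -scalerA opprD addrACA scalerBr.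
have tc0 := mulr_gt0 t0 c0.
have q01 : 0 <= 1 - t * c / 2 < 1 by apply/andP; split; lra.
apply: (bounded_below_surj_invertible hPl c0 (coercive_bounded_below hP)) => y.
have hQq := coercive_contraction hP hN (ltW N0) t0 tN tc.
have [x ex] := neumann_surjective hQ q01 hQq (t%:C *: y).
exists x; apply: (scalerI (a := t%:C)); first by rewrite eq_complex /= negb_and gt_eqF.
by rewrite -ex opprB addrC subrK.
Qed.

Lemma bounded_below_left_invertible A As c : bounded_op A -> bounded_op As ->
  (forall x y, ip (A x) y = ip x (As y)) -> 0 < c -> bounded_below A c ->
  left_invertible A.
Proof.
move=> bA bAs adjA c0 hA.
have [S [bS [SP _]]] : invertible (fun x => As (A x)).
  apply: (coercive_invertible (c := c ^+ 2)); [exact: bounded_op_comp | exact: exprn_gt0 |].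
  move=> x; exists (vnorm (A x) ^+ 2); first by rewrite ipC -adjA ipxx conjc_real.
  by rewrite -exprMn ler_pXn2r ?nnegrE ?mulr_ge0 ?vnorm_ge0 ?(ltW c0).
by exists (fun y => S (As y)); split; [exact: bounded_op_comp | exact: SP].
Qed.

Lemma adjoint_right_invertible_bounded_below D Dp :
  (forall x y, ip (D x) y = ip x (Dp y)) -> right_invertible Dp ->
  exists2 c, 0 < c & bounded_below D c.
Proof.
move=> adjD [S [bS DpS]]; have [_ [M M0 hM]] := bounded_opP bS.
exists M^-1; rewrite ?invr_gt0 // => x; rewrite mulrC ler_pdivrMr //.
have := cauchy_schwarz (D x) (S x).
rewrite adjD DpS ipxx normc_real ger0_norm ?sqr_ge0 // => x2.
have := ler_wpM2l (vnorm_ge0 (D x)) (hM x).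
have := mulr_ge0 (vnorm_ge0 (D x)) (ltW M0); nra.
Qed.

End InnerProduct.

Section Corollary.
Variables (R : realType) (V : completeNormedModType R[i]) (ip : V -> V -> R[i]).
Variables (T Tstar B : V -> V).
Hypotheses (Hip : is_inner ip) (HT : bounded_op T) (Hlinv : left_invertible T)
  (H0 : spec T 0) (HTstar : bounded_op Tstar) (Hadj : is_adjoint ip T Tstar)
  (HB : bounded_op B) (HB1 : forall x, B (Tstar (T x)) = x)
  (HB2 : forall x, Tstar (T (B x)) = x).
Hypothesis rspec_T' : rspec (fun x => T (B x)) `<=` @closed_disc R.
Implicit Types (l : R[i]) (x y : V).

Lemma adjoint_sym x y : ip (Tstar x) y = ip x (T y).
Proof. by rewrite (ipC Hip) -Hadj -(ipC Hip). Qed.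

Lemma B_selfadjoint x y : ip (B x) y = ip x (B y).
Proof. by rewrite -{1}[y]HB2 -Hadj -[x in RHS]HB2 adjoint_sym. Qed.

Lemma shift_adjoint l x y : ip (shift_op T l x) y = ip x (shift_op Tstar l^*%C y).
Proof. by rewrite /shift_op (ipBl Hip) (ipZl Hip) (ipBr Hip) (ipZr Hip) conjcK Hadj. Qed.

Lemma shift_bounded_below l : normc l < 1 ->
  exists2 c, 0 < c & bounded_below (shift_op T l) c.
Proof.
move=> l1; have [->|l0] := eqVneq l 0.
  have -> : shift_op T 0 = T by apply/funext => x; rewrite /shift_op scale0r subr0.
  exact: left_invertible_bounded_below.
set mu := (l^*%C)^-1.
have rinv : right_invertible (shift_op (fun x => T (B x)) mu).
  apply: contrapT => /rspec_T'; rewrite /closed_disc /= normc_le1 /mu normcV normc_conj.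
  by rewrite invf_le1 ?normc_gt0 // leNgt l1.
pose D x := B (Tstar x) - l^-1 *: x.
have adjD x y : ip (D x) y = ip x (shift_op (fun x => T (B x)) mu y).
  rewrite /D /shift_op (ipBl Hip) (ipZl Hip) (ipBr Hip) (ipZr Hip) /mu.
  by rewrite conjc_inv conjcK B_selfadjoint adjoint_sym.
have [c c0 hD] := adjoint_right_invertible_bounded_below Hip adjD rinv.
have [hB _] := bounded_opP HB; have [hTs _] := bounded_opP HTstar.
have [_ [M M0 hM]] := bounded_opP (bounded_op_comp HB HTstar).
have DE x : D x = - l^-1 *: B (Tstar (shift_op T l x)).
  rewrite /D /shift_op (linB hTs) (linZ hTs) (linB hB) (linZ hB) HB1 scalerBr scalerA.
  by rewrite mulNr mulVf // scaleN1r opprK scaleNr addrC.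
exists (c * normc l / M); first by rewrite !mulr_gt0 ?invr_gt0 ?normc_gt0.
move=> x; have := hD x; rewrite DE vnormZ normcN normcV ler_pdivlMl ?normc_gt0 // => cD.
rewrite mulrAC ler_pdivrMr //; have := hM (shift_op T l x); lra.
Qed.

Lemma shift_left_invertible l : normc l < 1 -> left_invertible (shift_op T l).
Proof.
move=> l1; have [c c0 hc] := shift_bounded_below l1.
exact: (bounded_below_left_invertible Hip (shift_op_bounded l HT)
  (shift_op_bounded l^*%C HTstar) (shift_adjoint l) c0 hc).
Qed.

Lemma shift_not_invertible l : normc l < 1 -> ~ invertible (shift_op T l).
Proof.
move=> l1; have [hT _] := bounded_opP HT.
pose P (s : R) := ~ invertible (shift_op T (s%:C * l)).
suff : P 1 by rewrite /P rmorph1 mul1r.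
apply: (@locally_constant_unit_interval R P); last by rewrite /P rmorph0 mul0r.
move=> s /andP[s0 s1]; have nl0 := normc_ge0 l.
have sl1 : normc (s%:C * l) < 1.
  by rewrite normcM normc_real ger0_norm // (le_lt_trans _ l1) // ler_piMl.
have [c c0 hc] := shift_bounded_below sl1.
exists (c / 2 / (normc l + 1)); first by rewrite !divr_gt0 // ltr_pwDr.
move=> t _ st; rewrite /P.
have -> : shift_op T (t%:C * l) = fun x => shift_op T (s%:C * l) x + ((s - t)%:C * l) *: x.
  by apply/funext => x; rewrite (shift_opD _ (s%:C * l)) rmorphB mulrBl.
have e2c : normc ((s - t)%:C * l) * 2 < c.
  rewrite ltr_pdivlMr ?ltr_pwDr // in st.
  by rewrite normcM normc_real; have := normr_ge0 (s - t); nra.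
have := invertible_addE (shift_op_linear _ hT) (scale_linear _) c0 hc (scale_bounded _)
  (normc_ge0 _) e2c.
by move=> E; split=> N1 N2; apply: N1; apply/E.
Qed.

Lemma shift_not_right_invertible_open_disc l :
  normc l < 1 -> ~ right_invertible (shift_op T l).
Proof.
move=> l1 rinv; apply: (shift_not_invertible l1).
exact: left_right_invertible (shift_left_invertible l1) rinv.
Qed.

Lemma shift_not_right_invertible_closed_disc l :
  normc l <= 1 -> ~ right_invertible (shift_op T l).
Proof.
move=> l1 rinv; have [hT _] := bounded_opP HT.
have [d d0 hd] := right_invertible_add (shift_op_linear l hT) rinv.
pose t := d / (d + 1).
have d1 : 0 < d + 1 by rewrite addr_gt0.
have t0 : 0 < t by rewrite divr_gt0.
have t1 : t < 1 by rewrite ltr_pdivrMr // mul1r ltrDl.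
have td : t < d by rewrite ltr_pdivrMr //; nra.
have nl0 := normc_ge0 l.
apply: (@shift_not_right_invertible_open_disc ((1 - t)%:C * l)).
  by rewrite normcM normc_real ger0_norm ?subr_ge0 ?(ltW t1) //; nra.
have -> : shift_op T ((1 - t)%:C * l) = fun x => shift_op T l x + (t%:C * l) *: x.
  apply/funext => x; rewrite (shift_opD _ l); congr (_ + _ *: _).
  by rewrite rmorphB rmorph1; ring.
apply: (hd _ (normc (t%:C * l))).
- exact: scale_linear.
- exact: scale_bounded.
- exact: normc_ge0.
- by rewrite normcM normc_real ger0_norm ?(ltW t0) //; nra.
Qed.

End Corollary.

Unset Implicit Arguments.
Set Strict Implicit.
Set Printing Implicit Defensive.

Theorem corollary4p5 (R : realType) (V : completeNormedModType R[i])
  (ip : V -> V -> R[i]) (Hip : is_inner ip)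
  (T Tstar B : V -> V)
  (HT : bounded_op T) (Hlinv : left_invertible T) (H0 : spec T 0)
  (HTstar : bounded_op Tstar) (Hadj : is_adjoint ip T Tstar)
  (HB : bounded_op B) (HB1 : forall x, B (Tstar (T x)) = x)
  (HB2 : forall x, Tstar (T (B x)) = x) :
  let T' := fun x => T (B x) in
  (rspec T' `<=` @closed_disc R -> @open_disc R `<=` rspec T `\` lspec T) /\
  ((forall x, `|T x| <= `|x|) -> rspec T' `<=` @closed_disc R ->
     rspec T = spec T /\ spec T = @closed_disc R).
Proof.
move=> T'; split => [rspec_T' l | contr rspec_T'].
  rewrite /open_disc /= normc_lt1 => l1; split.
    exact: (shift_not_right_invertible_open_disc Hip HT Hlinv H0 HTstar Hadj HB HB1 HB2
      rspec_T' l1).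
  by apply; exact: (shift_left_invertible Hip HT Hlinv HTstar Hadj HB HB1 HB2 rspec_T' l1).
have disc_rspec : @closed_disc R `<=` rspec T.
  move=> l; rewrite /closed_disc /= normc_le1.
  exact: (shift_not_right_invertible_closed_disc Hip HT Hlinv H0 HTstar Hadj HB HB1 HB2
    rspec_T').
have rspec_spec : rspec T `<=` spec T by move=> l nr /invertible_right_invertible.
have spec_disc : spec T `<=` @closed_disc R.
  move=> l nl; rewrite /closed_disc /= normc_le1 leNgt; apply/negP => l1; apply: nl.
  have [hT _] := bounded_opP HT.
  by apply: (shift_op_invertible hT _ ler01 l1) => x; rewrite mul1r -lecR -!normr_vnorm.
split; apply/seteqP; split => //.
- exact: subset_trans spec_disc disc_rspec.
- exact: subset_trans disc_rspec rspec_spec.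
Qed.
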